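(* Let $d\ge2$ be an integer, $\beta>0$, and let $v\in C^1((0,+\infty),\mathbb{R})$ satisfy \[ \limsup_{r\to0}v'(r)<+\infty\quad\text{and}\quad\frac{v'(r)}{r}\xrightarrow[r\to+\infty]{}+\infty. \] Set $v_*(r)=v(r)-\frac{d-1}{\beta}\ln r$, $\pi_*(dr)=Z_*^{-1}e^{-\beta v_*(r)}dr$ on $(0,+\infty)$ and $r_*=\int_0^\infty r\,\pi_*(dr)$. Then the equation \[ \beta^{-1}\varphi'(r) = r_* - r + v_*'(r)\varphi(r),\qquad r>0, \] admits a unique solution $\varphi\in\mathrm{L}^2(\pi_* )$ whose primitives belong to $\mathrm{L}^2(\pi_* )$. Moreover this solution extends continuously to $[0,+\infty)$ with $\varphi(0)=0$, and $\varphi(r)\to0$ as $r\to+\infty$. *)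

From Stdlib Require Import Reals Lra.
Open Scope R_scope.

Definition vstar (d : nat) (beta : R) (v : R -> R) (r : R) : R :=
  v r - (INR d - 1) / beta * ln r.

(* unnormalised density of pi_star : e^{-beta v_star(r)} ; pi_star = dens / Z_star *)
Definition dens (d : nat) (beta : R) (v : R -> R) (r : R) : R :=
  exp (- beta * vstar d beta v r).

Definition improper_int0inf (f : R -> R) (l : R) : Prop :=
  (forall a b, 0 < a -> a <= b -> inhabited (Riemann_integrable f a b)) /\
  (forall eps, eps > 0 -> exists a0 b0, 0 < a0 < b0 /\
     forall a b (pr : Riemann_integrable f a b),
       0 < a <= a0 -> b0 <= b -> Rabs (RiemannInt pr - l) < eps).

(* f in L^2(pi_star) (normalisation constant irrelevant), for continuous f *)
Definition L2pistar (d : nat) (beta : R) (v : R -> R) (f : R -> R) : Prop :=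
  exists l, improper_int0inf (fun r => f r ^ 2 * dens d beta v r) l.

Definition good_solution (d : nat) (beta : R) (v v' : R -> R) (rstar : R)
    (phi : R -> R) : Prop :=
  (exists phi' : R -> R, forall r, 0 < r ->
      derivable_pt_lim phi r (phi' r) /\
      / beta * phi' r = rstar - r + (v' r - (INR d - 1) / beta / r) * phi r) /\
  L2pistar d beta v phi /\
  (exists Phi : R -> R,
      (forall r, 0 < r -> derivable_pt_lim Phi r (phi r)) /\ L2pistar d beta v Phi).

From Stdlib Require Import Reals Lra.
From Coquelicot Require Import Coquelicot.
Open Scope R_scope.

(* With D = exp (- beta v_* ) the unnormalised density of pi_*, the equation reads
   (phi D)' = beta (r_* - r) D, so any two solutions differ by a multiple of 1 / D,
   which is not in L^2(pi_* ) because D vanishes at infinity; this gives uniqueness.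
   The solution is phi = beta D^{-1} \int_0^r (r_* - s) D(s) ds.  Near 0, v' bounded
   above and d >= 2 give D(s) <= A D(r) for s <= r and D(s) <= K s, hence |phi(r)| = O(r).
   At infinity, v_*'(r)/r -> +oo gives \int_r^oo (s - r_* ) D <= eps D(r), and the choice
   of r_* as the mean of pi_* makes \int_0^r (r_* - s) D = - \int_r^oo (r_* - s) D, so
   phi -> 0.  The same growth makes (1 + r^2) D integrable, which yields the square
   integrability of phi (bounded) and of its primitive (of linear growth). *)

(** * Calculus on the half-line *)

Lemma is_derive_continuous (f : R -> R) x l : is_derive f x l -> continuous f x.
Proof. intros H. apply (@ex_derive_continuous R_AbsRing R_NormedModule). now exists l. Qed.

Lemma is_derive_continuity_pt (f : R -> R) x l : is_derive f x l -> continuity_pt f x.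
Proof. intros H. apply continuity_pt_filterlim, (is_derive_continuous f x l H). Qed.

Lemma le_of_is_derive_nonpos (f df : R -> R) a b : a <= b ->
  (forall x, a <= x <= b -> is_derive f x (df x)) ->
  (forall x, a <= x <= b -> df x <= 0) -> f b <= f a.
Proof.
  intros hab hf hdf.
  destruct (MVT_gen f a b df) as [c [hc e]];
    rewrite ?Rmin_left, ?Rmax_right in * by lra.
  - intros x hx. apply hf; lra.
  - intros x hx. apply (is_derive_continuity_pt f x (df x)), hf; lra.
  - rewrite ?Rmin_left, ?Rmax_right in hc by lra.
    assert (df c * (b - a) <= 0) by (apply Rmult_le_0_r; [apply hdf|]; lra).
    lra.
Qed.

Lemma eq_of_is_derive_0 (f : R -> R) :
  (forall x, 0 < x -> is_derive f x 0) -> forall x y, 0 < x -> 0 < y -> f x = f y.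
Proof.
  intros hf.
  assert (H : forall x y, 0 < x -> x <= y -> f x = f y).
  { intros x y hx hxy.
    assert (f y <= f x)
      by (apply (le_of_is_derive_nonpos f (fun _ => 0)); intros; [lra|apply hf|]; lra).
    assert (- f y <= - f x); [|lra].
    apply (le_of_is_derive_nonpos (fun t => - f t) (fun _ => 0)); intros; [lra| |lra].
    replace 0 with (opp 0 : R) by (unfold opp; simpl; lra).
    apply (is_derive_opp f), hf; lra. }
  intros x y hx hy. destruct (Rle_or_lt x y); [|symmetry]; apply H; lra.
Qed.

(** * Improper integrals on (0, +oo) *)

(* [improper_int0inf] with Coquelicot's total [RInt] in place of [RiemannInt]. *)
Definition is_RInt_0inf (f : R -> R) (l : R) : Prop :=
  forall eps, eps > 0 -> exists a0 b0, 0 < a0 < b0 /\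
    forall a b, 0 < a <= a0 -> b0 <= b -> Rabs (RInt f a b - l) < eps.

Lemma is_RInt_0inf_improper_int0inf (f : R -> R) l :
  improper_int0inf f l -> is_RInt_0inf f l.
Proof.
  intros [hf hl] eps heps. destruct (hl eps heps) as [a0 [b0 [hab0 H]]].
  exists a0, b0. split; auto. intros a b ha hb.
  destruct (hf a b ltac:(lra) ltac:(lra)) as [pr].
  rewrite (RInt_Reals f a b pr). now apply H.
Qed.

Section ContinuousOnRpos.
Variable f : R -> R.
Hypothesis f_cont : forall x, 0 < x -> continuous f x.

Lemma ex_RInt_Rpos a b : 0 < a -> 0 < b -> ex_RInt f a b.
Proof.
  intros ha hb. apply (@ex_RInt_continuous R_CompleteNormedModule).
  intros z hz. apply f_cont. pose proof (Rmin_glb_lt a b 0 ha hb). lra.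
Qed.

Lemma is_derive_RInt_Rpos a x : 0 < a -> 0 < x -> is_derive (fun y => RInt f a y) x (f x).
Proof.
  intros ha hx. apply (@is_derive_RInt R_CompleteNormedModule f _ a); [|now apply f_cont].
  assert (hx2 : 0 < x / 2) by lra. exists (mkposreal _ hx2). intros y hy.
  apply RInt_correct, ex_RInt_Rpos; auto.
  change (Rabs (y - x) < x / 2) in hy. apply Rabs_def2 in hy. lra.
Qed.

Lemma improper_int0inf_is_RInt_0inf l : is_RInt_0inf f l -> improper_int0inf f l.
Proof.
  intros hl. split.
  - intros a b ha hab. constructor. apply ex_RInt_Reals_0, ex_RInt_Rpos; lra.
  - intros eps heps. destruct (hl eps heps) as [a0 [b0 [hab0 H]]].
    exists a0, b0. split; auto. intros a b pr ha hb. rewrite <- RInt_Reals. now apply H.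
Qed.

Lemma RInt_le_of_le_derive (H dH : R -> R) a b : 0 < a -> a <= b ->
  (forall x, a <= x <= b -> is_derive H x (dH x)) ->
  (forall x, a <= x <= b -> f x <= dH x) -> RInt f a b <= H b - H a.
Proof.
  intros ha hab hH hle.
  assert (hK : RInt f a b - H b <= RInt f a a - H a).
  { apply (le_of_is_derive_nonpos (fun y => RInt f a y - H y) (fun x => f x - dH x)); auto.
    - intros x hx. apply (is_derive_minus (fun y => RInt f a y) H).
      + apply is_derive_RInt_Rpos; lra.
      + now apply hH.
    - intros x hx. specialize (hle x hx). lra. }
  rewrite RInt_point in hK. unfold zero in hK; simpl in hK. lra.
Qed.

Lemma RInt_ge_of_derive_le (H dH : R -> R) a b : 0 < a -> a <= b ->
  (forall x, a <= x <= b -> is_derive H x (dH x)) ->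
  (forall x, a <= x <= b -> dH x <= f x) -> H b - H a <= RInt f a b.
Proof.
  intros ha hab hH hle.
  assert (hK : H b - RInt f a b <= H a - RInt f a a).
  { apply (le_of_is_derive_nonpos (fun y => H y - RInt f a y) (fun x => dH x - f x)); auto.
    - intros x hx. apply (is_derive_minus H (fun y => RInt f a y)).
      + now apply hH.
      + apply is_derive_RInt_Rpos; lra.
    - intros x hx. specialize (hle x hx). lra. }
  rewrite RInt_point in hK. unfold zero in hK; simpl in hK. lra.
Qed.

Hypothesis f_nonneg : forall x, 0 < x -> 0 <= f x.

Lemma RInt_le_RInt_Rpos a a' b' b : 0 < a -> a <= a' -> a' <= b' -> b' <= b ->
  RInt f a' b' <= RInt f a b.
Proof.
  intros.
  rewrite <- (RInt_Chasles f a a' b), <- (RInt_Chasles f a' b' b) by (apply ex_RInt_Rpos; lra).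
  assert (0 <= RInt f a a') by (apply RInt_ge_0; [|apply ex_RInt_Rpos|intros; apply f_nonneg]; lra).
  assert (0 <= RInt f b' b) by (apply RInt_ge_0; [|apply ex_RInt_Rpos|intros; apply f_nonneg]; lra).
  unfold plus; simpl. lra.
Qed.

(* The partial integrals increase with [[a, b]], so their supremum is the improper integral. *)
Lemma is_RInt_0inf_sup :
  (exists K, forall a b, 0 < a -> a <= b -> RInt f a b <= K) ->
  exists l, (forall a b, 0 < a -> a <= b -> RInt f a b <= l) /\ is_RInt_0inf f l.
Proof.
  intros [K HK].
  set (E := fun y => exists a b, 0 < a /\ a <= b /\ y = RInt f a b).
  assert (hE : bound E) by (exists K; intros y [a [b [ha [hab ->]]]]; auto).
  assert (hE1 : E (RInt f 1 1)) by (exists 1, 1; repeat split; lra).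
  destruct (completeness E hE (ex_intro _ _ hE1)) as [l [hub hlub]].
  assert (hle : forall a b, 0 < a -> a <= b -> RInt f a b <= l)
    by (intros a b ha hab; apply hub; exists a, b; auto).
  exists l. split; auto. intros eps heps.
  destruct (Classical_Pred_Type.not_all_not_ex _ (fun y => E y /\ l - eps < y)) as
    [y [[a1 [b1 [ha1 [hab1 ->]]]] hy]].
  { intros hn. assert (l <= l - eps); [|lra]. apply hlub. intros y hy.
    destruct (Rle_or_lt y (l - eps)); auto. exfalso; now apply (hn y). }
  exists a1, (b1 + 1). split; [lra|]. intros a b ha hb.
  assert (RInt f a1 b1 <= RInt f a b) by (apply RInt_le_RInt_Rpos; lra).
  assert (RInt f a b <= l) by (apply hle; lra).
  apply Rabs_def1; lra.
Qed.

Lemma not_is_RInt_0inf_of_ge m S l : 0 < m -> 0 < S ->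
  (forall s, S <= s -> m <= f s) -> ~ is_RInt_0inf f l.
Proof.
  intros hm hS hge hl. destruct (hl 1 ltac:(lra)) as [a0 [b0 [hab0 H]]].
  set (a := Rmin a0 S). set (b := Rmax b0 S + (Rabs l + 1) / m).
  assert (ha : 0 < a) by (apply Rmin_glb_lt; lra).
  assert (a <= a0 /\ a <= S) by (split; [apply Rmin_l|apply Rmin_r]).
  assert (b0 <= Rmax b0 S /\ S <= Rmax b0 S) by (split; [apply Rmax_l|apply Rmax_r]).
  assert (hq : 0 <= (Rabs l + 1) / m)
    by (apply Rdiv_le_0_compat; [pose proof (Rabs_pos l)|]; lra).
  specialize (H a b ltac:(lra) ltac:(unfold b; lra)).
  assert (I1 : RInt f S b <= RInt f a b) by (apply RInt_le_RInt_Rpos; unfold b; lra).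
  assert (I2 : RInt (fun _ => m) S b <= RInt f S b).
  { apply RInt_le; [unfold b; lra|apply ex_RInt_const|apply ex_RInt_Rpos; unfold b; lra|].
    intros x hx. apply hge; lra. }
  rewrite RInt_const in I2. unfold scal in I2; simpl in I2; unfold mult in I2; simpl in I2.
  assert ((b - S) * m >= Rabs l + 1).
  { unfold b. replace (Rabs l + 1) with ((Rabs l + 1) / m * m) at 2 by (field; lra).
    apply Rle_ge, Rmult_le_compat_r; lra. }
  pose proof (Rle_abs l). apply Rabs_def2 in H. lra.
Qed.
End ContinuousOnRpos.

Lemma is_RInt_0inf_ext (f g : R -> R) l :
  (forall x, 0 < x -> f x = g x) -> is_RInt_0inf f l -> is_RInt_0inf g l.
Proof.
  intros hfg hf eps heps. destruct (hf eps heps) as [a0 [b0 [hab0 H]]].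
  exists a0, b0. split; auto. intros a b ha hb.
  rewrite <- (@RInt_ext R_CompleteNormedModule f g); [now apply H|].
  intros x hx. apply hfg. pose proof (Rmin_glb_lt a b 0 ltac:(lra) ltac:(lra)). lra.
Qed.

Lemma RInt_lincomb (f g : R -> R) c a b : ex_RInt f a b -> ex_RInt g a b ->
  RInt (fun s => c * f s - g s) a b = c * RInt f a b - RInt g a b.
Proof.
  intros hf hg.
  change (c * RInt f a b) with (scal c (RInt f a b)).
  rewrite <- (@RInt_scal R_CompleteNormedModule f a b c hf).
  exact (@RInt_minus R_CompleteNormedModule _ g a b (ex_RInt_scal f a b c hf) hg).
Qed.

Lemma is_RInt_0inf_lincomb (f g : R -> R) c lf lg :
  (forall x, 0 < x -> continuous f x) -> (forall x, 0 < x -> continuous g x) ->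
  is_RInt_0inf f lf -> is_RInt_0inf g lg ->
  is_RInt_0inf (fun s => c * f s - g s) (c * lf - lg).
Proof.
  intros hfc hgc hf hg eps heps.
  assert (hc : 0 < Rabs c + 1) by (pose proof (Rabs_pos c); lra).
  destruct (hf (eps / (2 * (Rabs c + 1)))) as [a1 [b1 [h1 H1]]].
  { apply Rdiv_lt_0_compat; lra. }
  destruct (hg (eps / 2)) as [a2 [b2 [h2 H2]]]; [lra|].
  exists (Rmin a1 a2), (Rmax b1 b2).
  pose proof (Rmin_l a1 a2). pose proof (Rmin_r a1 a2).
  pose proof (Rmax_l b1 b2). pose proof (Rmax_r b1 b2).
  split; [split; [apply Rmin_glb_lt|]; lra|]. intros a b ha hb.
  specialize (H1 a b ltac:(lra) ltac:(lra)). specialize (H2 a b ltac:(lra) ltac:(lra)).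
  rewrite RInt_lincomb by (apply ex_RInt_Rpos; auto; lra).
  replace (c * RInt f a b - RInt g a b - (c * lf - lg))
    with (c * (RInt f a b - lf) - (RInt g a b - lg)) by ring.
  eapply Rle_lt_trans; [apply Rabs_triang|]. rewrite Rabs_Ropp, Rabs_mult.
  assert (Rabs c * Rabs (RInt f a b - lf) <= (Rabs c + 1) * (eps / (2 * (Rabs c + 1))))
    by (apply Rmult_le_compat; try apply Rabs_pos; lra).
  replace ((Rabs c + 1) * (eps / (2 * (Rabs c + 1)))) with (eps / 2) in * by (field; lra).
  lra.
Qed.

Lemma Rmult_div_succ_lt c eps : 0 <= c -> 0 < eps -> c * (eps / (c + 1)) < eps.
Proof.
  intros hc heps. apply (Rmult_lt_reg_r (c + 1)); [lra|].
  replace (c * (eps / (c + 1)) * (c + 1)) with (c * eps) by (field; lra). nra.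
Qed.

Lemma exp_le_compat x y : x <= y -> exp x <= exp y.
Proof. intros [h | ->]; [left; now apply exp_increasing | right; reflexivity]. Qed.

Lemma sq_add_div_ge x y c B : 0 < y <= 1 -> Rabs x <= B -> B * y <= Rabs c / 2 ->
  c ^ 2 / 4 <= (x + c / y) ^ 2 * y.
Proof.
  intros hy hx hB.
  assert (hxy : Rabs c / 2 <= Rabs (x * y + c)).
  { pose proof (Rabs_triang_inv c (- (x * y))) as T.
    rewrite Rabs_Ropp, Rabs_mult, (Rabs_pos_eq y) in T by lra.
    replace (c - - (x * y)) with (x * y + c) in T by ring.
    assert (Rabs x * y <= B * y) by (apply Rmult_le_compat_r; lra). lra. }
  assert (hsq : c ^ 2 / 4 <= (x * y + c) ^ 2).
  { rewrite <- (pow2_abs c), <- (pow2_abs (x * y + c)). pose proof (Rabs_pos c). nra. }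
  replace ((x + c / y) ^ 2 * y) with ((x * y + c) ^ 2 * / y) by (field; lra).
  assert (1 <= / y) by (rewrite <- Rinv_1; apply Rinv_le_contravar; lra).
  pose proof (pow2_ge_0 (x * y + c)). nra.
Qed.

(** * The density *)

Lemma dens_pos d beta v r : 0 < dens d beta v r.
Proof. apply exp_pos. Qed.

Section Density.
Variables (d : nat) (beta : R) (v v' : R -> R).
Hypothesis hd : (2 <= d)%nat.
Hypothesis hbeta : 0 < beta.
Hypothesis hv : forall r, 0 < r -> derivable_pt_lim v r (v' r).

Local Notation D := (dens d beta v).

Definition dvstar r := v' r - (INR d - 1) / beta / r.

Lemma INR_d_ge_2 : 2 <= INR d.
Proof. apply (le_INR 2), hd. Qed.

Lemma is_derive_vstar r : 0 < r -> is_derive (vstar d beta v) r (dvstar r).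
Proof.
  intros hr. unfold vstar, dvstar.
  replace (v' r - (INR d - 1) / beta / r) with (minus (v' r) (scal ((INR d - 1) / beta) (/ r)))
    by (unfold minus, plus, opp, scal; simpl; unfold mult; simpl; field; lra).
  apply (is_derive_minus v (fun r => scal ((INR d - 1) / beta) (ln r))).
  - now apply is_derive_Reals, hv.
  - apply is_derive_scal, is_derive_Reals, derivable_pt_lim_ln, hr.
Qed.

Lemma is_derive_dens r : 0 < r -> is_derive D r (- beta * dvstar r * D r).
Proof.
  intros hr. unfold dens.
  apply (is_derive_comp exp (fun r => - beta * vstar d beta v r)).
  - apply is_derive_Reals, derivable_pt_lim_exp.
  - now apply is_derive_scal, is_derive_vstar.
Qed.

Lemma continuous_dens r : 0 < r -> continuous D r.
Proof. intros hr. eapply is_derive_continuous, is_derive_dens, hr. Qed.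

Variables C delta : R.
Hypothesis hdelta : 0 < delta.
Hypothesis hC : forall r, 0 < r < delta -> v' r <= C.

Lemma v_sub_le s r : 0 < s <= r -> r < delta -> v r - v s <= Rabs C * (r - s).
Proof.
  intros hs hr.
  assert (v r - Rabs C * r <= v s - Rabs C * s); [|lra].
  apply (le_of_is_derive_nonpos (fun x => v x - Rabs C * x) (fun x => v' x - Rabs C)); [lra| |].
  - intros x hx.
    replace (v' x - Rabs C) with (minus (v' x) (scal (Rabs C) one))
      by (unfold minus, plus, opp, scal, one; simpl; unfold mult; simpl; ring).
    apply (is_derive_minus v (fun x => scal (Rabs C) x)).
    + apply is_derive_Reals, hv; lra.
    + apply is_derive_scal, (@is_derive_id R_AbsRing).
  - intros x hx. pose proof (Rle_abs C). pose proof (hC x ltac:(lra)). lra.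
Qed.

Lemma log_dens_le s r : 0 < s <= r -> r < delta ->
  - beta * vstar d beta v s <=
  - beta * vstar d beta v r + beta * Rabs C * delta + (INR d - 1) * (ln s - ln r).
Proof.
  intros hs hr. unfold vstar.
  pose proof (v_sub_le s r hs hr).
  assert (Rabs C * (r - s) <= Rabs C * delta) by (apply Rmult_le_compat_l; [apply Rabs_pos|lra]).
  assert (beta * (v r - v s) <= beta * (Rabs C * delta)) by (apply Rmult_le_compat_l; lra).
  replace (- beta * (v s - (INR d - 1) / beta * ln s))
    with (- beta * v s + (INR d - 1) * ln s) by (field; lra).
  replace (- beta * (v r - (INR d - 1) / beta * ln r))
    with (- beta * v r + (INR d - 1) * ln r) by (field; lra).
  lra.
Qed.

Lemma dens_le_near0 : exists A, 0 < A /\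
  forall s r, 0 < s <= r -> r < delta -> D s <= A * D r.
Proof.
  exists (exp (beta * Rabs C * delta)). split; [apply exp_pos|].
  intros s r hs hr. unfold dens. rewrite <- exp_plus. apply exp_le_compat.
  pose proof (log_dens_le s r hs hr). pose proof INR_d_ge_2.
  assert (ln s <= ln r) by (apply ln_le; lra).
  assert ((INR d - 1) * (ln s - ln r) <= 0) by nra.
  lra.
Qed.

(* Since d >= 2, the factor r^(d-1) of the density makes it vanish at 0. *)
Lemma dens_le_linear0 : exists K eta, 0 < K /\ 0 < eta /\
  forall s, 0 < s <= eta -> D s <= K * s.
Proof.
  set (r := delta / 2).
  exists (exp (- beta * vstar d beta v r + beta * Rabs C * delta - (INR d - 1) * ln r)), (Rmin r 1).
  split; [apply exp_pos|]. split; [apply Rmin_glb_lt; unfold r; lra|].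
  intros s hs. pose proof (Rmin_l r 1). pose proof (Rmin_r r 1).
  apply Rle_trans with
    (exp (- beta * vstar d beta v r + beta * Rabs C * delta - (INR d - 1) * ln r + ln s)).
  2: { rewrite exp_plus, exp_ln by lra. lra. }
  apply exp_le_compat.
  pose proof (log_dens_le s r ltac:(lra) ltac:(unfold r; lra)). pose proof INR_d_ge_2.
  assert (ln s <= 0) by (rewrite <- ln_1; apply ln_le; lra).
  nra.
Qed.

Hypothesis hgrowth : forall M, exists R0, forall r, R0 < r -> v' r / r > M.

Lemma dvstar_superlinear L : exists R, 1 <= R /\ forall r, R <= r -> L * r <= beta * dvstar r.
Proof.
  destruct (hgrowth ((Rabs L + INR d) / beta)) as [R0 HR0].
  exists (Rmax 1 (R0 + 1)). split; [apply Rmax_l|]. intros r hr.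
  pose proof (Rmax_l 1 (R0 + 1)). pose proof (Rmax_r 1 (R0 + 1)).
  specialize (HR0 r ltac:(lra)). pose proof INR_d_ge_2.
  assert (h1 : (Rabs L + INR d) / beta * r < v' r).
  { apply (Rmult_lt_reg_r (/ r)); [apply Rinv_0_lt_compat; lra|].
    rewrite Rmult_assoc, Rinv_r, Rmult_1_r by lra. exact HR0. }
  assert (h2 : (Rabs L + INR d) * r < beta * v' r).
  { replace ((Rabs L + INR d) * r) with (beta * ((Rabs L + INR d) / beta * r)) by (field; lra).
    apply Rmult_lt_compat_l; lra. }
  assert (h3 : beta * dvstar r = beta * v' r - (INR d - 1) / r) by (unfold dvstar; field; lra).
  assert (h4 : (INR d - 1) / r <= INR d - 1).
  { unfold Rdiv. rewrite <- (Rmult_1_r (INR d - 1)) at 2.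
    apply Rmult_le_compat_l; [lra|]. rewrite <- Rinv_1. apply Rinv_le_contravar; lra. }
  assert (L * r <= Rabs L * r) by (apply Rmult_le_compat_r; [lra|apply Rle_abs]).
  nra.
Qed.

(* [weight] dominates the integrands of all the moments and squared norms considered. *)
Definition weight r := (1 + r ^ 2) * D r.

Definition dweight r := D r * (2 * r - (1 + r ^ 2) * (beta * dvstar r)).

Lemma weight_pos r : 0 < weight r.
Proof. unfold weight. pose proof (dens_pos d beta v r). pose proof (pow2_ge_0 r). nra. Qed.

Lemma is_derive_weight r : 0 < r -> is_derive weight r (dweight r).
Proof.
  intros hr. unfold weight, dweight.
  replace (D r * (2 * r - (1 + r ^ 2) * (beta * dvstar r)))
    with (plus (mult (2 * r) (D r)) (mult (1 + r ^ 2) (- beta * dvstar r * D r)))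
    by (unfold plus, mult; simpl; ring).
  apply (is_derive_mult (fun r => 1 + r ^ 2) D).
  - auto_derive; [exact I|ring].
  - now apply is_derive_dens.
  - intros; apply Rmult_comm.
Qed.

Lemma continuous_weight r : 0 < r -> continuous weight r.
Proof. intros hr. eapply is_derive_continuous, is_derive_weight, hr. Qed.

Lemma weight_decay : exists R, 1 <= R /\ forall r, R <= r -> dweight r <= - weight r.
Proof.
  destruct (dvstar_superlinear 2) as [R [hR HR]]. exists R. split; auto.
  intros r hr. specialize (HR r hr). pose proof (dens_pos d beta v r). unfold weight, dweight.
  assert ((1 + r ^ 2) * (2 * r) <= (1 + r ^ 2) * (beta * dvstar r))
    by (apply Rmult_le_compat_l; [pose proof (pow2_ge_0 r)|]; lra).
  assert (1 + r ^ 2 <= (1 + r ^ 2) * (2 * r) - 2 * r) by nra.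
  nra.
Qed.

Lemma RInt_weight_bounded : exists K, forall a b, 0 < a -> a <= b -> RInt weight a b <= K.
Proof.
  destruct weight_decay as [R [hR HR]].
  destruct dens_le_linear0 as [K [eta [hK [heta HK]]]].
  pose proof (Rmin_l eta 1). pose proof (Rmin_r eta 1).
  assert (0 < Rmin eta 1) by (apply Rmin_glb_lt; lra).
  set (e := Rmin eta 1) in *. clearbody e.
  exists (2 * K + RInt weight e R + weight R).
  intros a b ha hab.
  pose proof (Rmin_l a e). pose proof (Rmin_r a e).
  pose proof (Rmax_l b R). pose proof (Rmax_r b R).
  set (a' := Rmin a e) in *. set (b' := Rmax b R) in *.
  assert (0 < a') by (apply Rmin_glb_lt; lra).
  assert (hw : forall x, 0 < x -> 0 <= weight x) by (intros; left; apply weight_pos).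
  apply Rle_trans with (RInt weight a' b');
    [apply (RInt_le_RInt_Rpos weight continuous_weight hw); lra|].
  rewrite <- (RInt_Chasles weight a' e b'), <- (RInt_Chasles weight e R b')
    by (apply ex_RInt_Rpos; [apply continuous_weight|lra|lra]).
  unfold plus; simpl.
  assert (I1 : RInt weight a' e <= 2 * K).
  { apply Rle_trans with ((e - a') * (2 * K)); [|nra].
    eapply Rle_trans; [apply Rle_abs|].
    apply abs_RInt_le_const; [lra|apply ex_RInt_Rpos; [apply continuous_weight|lra|lra]|].
    intros t ht. rewrite Rabs_pos_eq by (apply hw; lra). unfold weight.
    pose proof (HK t ltac:(lra)). pose proof (dens_pos d beta v t).
    assert (t ^ 2 <= 1) by nra. assert (D t <= K) by nra. nra. }
  assert (I3 : RInt weight R b' <= weight R - weight b').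
  { apply (Rle_trans _ ((fun x => - weight x) b' - (fun x => - weight x) R)); [|lra].
    apply (RInt_le_of_le_derive weight continuous_weight (fun x => - weight x)
      (fun x => - dweight x)); [lra|lra| |].
    - intros x hx. apply (is_derive_opp weight), is_derive_weight. lra.
    - intros x hx. specialize (HR x ltac:(lra)). lra. }
  pose proof (weight_pos b'). lra.
Qed.

Lemma is_RInt_0inf_of_le_weight (f : R -> R) c :
  (forall x, 0 < x -> continuous f x) -> (forall x, 0 < x -> 0 <= f x) ->
  (forall x, 0 < x -> f x <= c * weight x) ->
  exists l, (forall a b, 0 < a -> a <= b -> RInt f a b <= l) /\ is_RInt_0inf f l.
Proof.
  intros hfc hf hle. apply is_RInt_0inf_sup; auto.
  assert (hc : 0 <= c).
  { pose proof (hf 1 ltac:(lra)). pose proof (hle 1 ltac:(lra)). pose proof (weight_pos 1). nra. }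
  destruct RInt_weight_bounded as [K HK]. exists (c * K).
  intros a b ha hab.
  assert (E := @RInt_scal R_CompleteNormedModule weight a b c).
  unfold scal in E; simpl in E; unfold mult in E; simpl in E.
  apply Rle_trans with (RInt (fun x => c * weight x) a b).
  - apply RInt_le; auto; [apply ex_RInt_Rpos; auto; lra| |intros; apply hle; lra].
    apply ex_RInt_Rpos; [|lra|lra].
    intros x hx. apply (continuous_scal_r c weight), continuous_weight, hx.
  - rewrite E by (apply ex_RInt_Rpos; auto using continuous_weight; lra).
    apply Rmult_le_compat_l; auto.
Qed.

Lemma continuous_sq_mul_dens (f : R -> R) x : 0 < x -> continuous f x ->
  continuous (fun x => f x ^ 2 * D x) x.
Proof.
  intros hx hf. apply (continuous_mult (fun x => f x ^ 2) D); [|now apply continuous_dens].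
  apply (continuous_mult f (fun x => f x * 1)); [auto|].
  apply (continuous_mult f (fun _ => 1)); [auto|apply continuous_const].
Qed.

Lemma continuous_id_mul_dens x : 0 < x -> continuous (fun x => x * D x) x.
Proof.
  intros hx.
  apply (continuous_mult (fun x => x) D); [apply continuous_id|now apply continuous_dens].
Qed.

Lemma L2pistar_of_sq_le (f : R -> R) c :
  (forall x, 0 < x -> continuous f x) ->
  (forall x, 0 < x -> f x ^ 2 <= c * (1 + x ^ 2)) -> L2pistar d beta v f.
Proof.
  intros hfc hle.
  destruct (is_RInt_0inf_of_le_weight (fun x => f x ^ 2 * D x) c) as [l [_ hl]].
  - intros; apply continuous_sq_mul_dens; auto.
  - intros x hx. pose proof (dens_pos d beta v x). pose proof (pow2_ge_0 (f x)). nra.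
  - intros x hx. unfold weight. rewrite <- Rmult_assoc.
    apply Rmult_le_compat_r; [apply Rlt_le, dens_pos|auto].
  - exists l. apply improper_int0inf_is_RInt_0inf; [|exact hl].
    intros; apply continuous_sq_mul_dens; auto.
Qed.

Lemma dens_vanishes_at_infty eta : 0 < eta -> exists S, 1 <= S /\ forall s, S <= s -> D s <= eta.
Proof.
  intros heta. destruct weight_decay as [R [hR HR]].
  pose proof (weight_pos R).
  exists (Rmax R (weight R / eta)). split; [pose proof (Rmax_l R (weight R / eta)); lra|].
  intros s hs. pose proof (Rmax_l R (weight R / eta)). pose proof (Rmax_r R (weight R / eta)).
  assert (hsR : weight s <= weight R).
  { apply (le_of_is_derive_nonpos weight dweight); [lra| |].
    - intros x hx. apply is_derive_weight. lra.
    - intros x hx. specialize (HR x ltac:(lra)). pose proof (weight_pos x). lra. }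
  pose proof (dens_pos d beta v s).
  assert (s * D s <= weight s) by (unfold weight; apply Rmult_le_compat_r; nra).
  apply (Rmult_le_reg_l (weight R / eta)); [apply Rdiv_lt_0_compat; lra|].
  replace (weight R / eta * eta) with (weight R) by (field; lra).
  assert (weight R / eta * D s <= s * D s) by (apply Rmult_le_compat_r; lra).
  lra.
Qed.

Lemma dens_moments : exists Z m1, 0 < Z /\ is_RInt_0inf D Z /\ is_RInt_0inf (fun r => r * D r) m1.
Proof.
  assert (hD : forall x, 0 < x -> 0 <= D x) by (intros; apply Rlt_le, dens_pos).
  destruct (is_RInt_0inf_of_le_weight D 1 continuous_dens hD) as [Z [hZle hZ]].
  { intros x hx. unfold weight. pose proof (hD x hx). pose proof (pow2_ge_0 x). nra. }
  destruct (is_RInt_0inf_of_le_weight (fun r => r * D r) 1 continuous_id_mul_dens) as [m1 [_ hm1]].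
  { intros x hx. pose proof (hD x hx). nra. }
  { intros x hx. unfold weight. pose proof (hD x hx). assert (x <= 1 + x ^ 2) by nra. nra. }
  exists Z, m1. split; auto.
  apply Rlt_le_trans with (RInt D 1 2); [|apply hZle; lra].
  apply RInt_gt_0; [lra|intros; apply dens_pos|intros; apply continuous_dens; lra].
Qed.

(** * The solution *)

(* [D] extended by 0 to [(-oo, 0]]; it is continuous everywhere by [dens_le_linear0]. *)
Definition dens0 s := if Rlt_dec 0 s then D s else 0.

Lemma continuous_dens0 s : continuous dens0 s.
Proof.
  destruct (Rtotal_order 0 s) as [hs | [<- | hs]].
  - apply (continuous_ext_loc _ D); [|now apply continuous_dens].
    assert (hs2 : 0 < s / 2) by lra. exists (mkposreal _ hs2). intros y hy.
    change (Rabs (y - s) < s / 2) in hy. apply Rabs_def2 in hy.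
    unfold dens0. destruct (Rlt_dec 0 y); [reflexivity|lra].
  - destruct dens_le_linear0 as [K [eta [hK [heta HK]]]].
    apply filterlim_locally. intros eps.
    assert (hr : 0 < Rmin eta (eps / (K + 1))).
    { apply Rmin_glb_lt; [lra|]. apply Rdiv_lt_0_compat; [apply cond_pos|lra]. }
    exists (mkposreal _ hr). intros y hy. simpl in hy.
    change (Rabs (y - 0) < Rmin eta (eps / (K + 1))) in hy.
    change (Rabs (dens0 y - dens0 0) < eps).
    pose proof (Rmin_l eta (eps / (K + 1))). pose proof (Rmin_r eta (eps / (K + 1))).
    pose proof (cond_pos eps).
    rewrite Rminus_0_r in hy. unfold dens0.
    destruct (Rlt_dec 0 0); [lra|]. destruct (Rlt_dec 0 y) as [hy0 | hy0].
    + rewrite Rabs_pos_eq in hy by lra. rewrite Rminus_0_r, Rabs_pos_eq by apply Rlt_le, dens_pos.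
      apply Rle_lt_trans with (K * y); [apply HK; lra|].
      apply Rlt_le_trans with (K * (eps / (K + 1))); [apply Rmult_lt_compat_l; lra|].
      apply Rlt_le, Rmult_div_succ_lt; lra.
    + rewrite Rminus_0_r, Rabs_R0. apply cond_pos.
  - apply (continuous_ext_loc _ (fun _ => 0)); [|apply continuous_const].
    assert (hs2 : 0 < - s / 2) by lra. exists (mkposreal _ hs2). intros y hy.
    change (Rabs (y - s) < - s / 2) in hy. apply Rabs_def2 in hy.
    unfold dens0. destruct (Rlt_dec 0 y); [lra|reflexivity].
Qed.

Section Solution.
Variable rstar : R.
Hypothesis hrstar : is_RInt_0inf (fun s => (rstar - s) * D s) 0.

Definition centered_dens s := (rstar - s) * dens0 s.

Definition centered_moment r := RInt centered_dens 0 r.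

Definition phi r := beta * centered_moment r / D r.

Lemma continuous_centered_dens s : continuous centered_dens s.
Proof.
  apply (continuous_mult (fun s => rstar - s) dens0); [|apply continuous_dens0].
  apply (continuous_minus (fun _ => rstar) (fun s => s));
    [apply continuous_const|apply continuous_id].
Qed.

Lemma ex_RInt_centered_dens a b : ex_RInt centered_dens a b.
Proof.
  apply (@ex_RInt_continuous R_CompleteNormedModule). intros; apply continuous_centered_dens.
Qed.

Lemma is_derive_centered_moment r : is_derive centered_moment r (centered_dens r).
Proof.
  apply (@is_derive_RInt R_CompleteNormedModule centered_dens _ 0);
    [|apply continuous_centered_dens].
  apply filter_forall. intros y. apply RInt_correct, ex_RInt_centered_dens.
Qed.

Lemma centered_moment_Chasles a b : 0 < a -> 0 < b ->
  centered_moment b = centered_moment a + RInt (fun s => (rstar - s) * D s) a b.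
Proof.
  intros ha hb. unfold centered_moment.
  rewrite <- (RInt_Chasles centered_dens 0 a b) by apply ex_RInt_centered_dens.
  unfold plus; simpl. f_equal.
  apply (@RInt_ext R_CompleteNormedModule). intros x hx.
  pose proof (Rmin_glb_lt a b 0 ha hb).
  unfold centered_dens, dens0. destruct (Rlt_dec 0 x); [reflexivity|lra].
Qed.

Lemma is_derive_phi r : 0 < r -> is_derive phi r (beta * (rstar - r + dvstar r * phi r)).
Proof.
  intros hr. pose proof (dens_pos d beta v r).
  replace (beta * (rstar - r + dvstar r * phi r)) with
    ((beta * centered_dens r * D r - beta * centered_moment r * (- beta * dvstar r * D r))
     / D r ^ 2).
  - apply (is_derive_div (fun r => beta * centered_moment r) D); [|now apply is_derive_dens|lra].
    apply (is_derive_scal centered_moment), is_derive_centered_moment.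
  - unfold phi, centered_dens, dens0. destruct (Rlt_dec 0 r); [|lra]. field. lra.
Qed.

Lemma continuous_phi r : 0 < r -> continuous phi r.
Proof. intros hr. eapply is_derive_continuous, is_derive_phi, hr. Qed.

Lemma abs_phi_le r M : 0 < r -> Rabs (centered_moment r) <= M * D r -> Rabs (phi r) <= beta * M.
Proof.
  intros hr hM. pose proof (dens_pos d beta v r). unfold phi, Rdiv.
  rewrite !Rabs_mult, Rabs_inv, (Rabs_pos_eq beta), (Rabs_pos_eq (D r)) by lra.
  replace (beta * M) with (beta * (M * D r) * / D r) by (field; lra).
  apply Rmult_le_compat_r; [left; apply Rinv_0_lt_compat; lra|].
  apply Rmult_le_compat_l; lra.
Qed.

Lemma phi_le_linear0 : exists c, 0 <= c /\ forall r, 0 < r < delta -> Rabs (phi r) <= c * r.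
Proof.
  destruct dens_le_near0 as [A [hA HA]].
  assert (hc : 0 <= Rabs rstar + delta) by (pose proof (Rabs_pos rstar); lra).
  exists (beta * ((Rabs rstar + delta) * A)).
  split; [apply Rmult_le_pos; [lra|apply Rmult_le_pos; lra]|].
  intros r hr. pose proof (dens_pos d beta v r).
  replace (beta * ((Rabs rstar + delta) * A) * r)
    with (beta * (r * (Rabs rstar + delta) * A)) by ring.
  apply abs_phi_le; [lra|].
  replace (r * (Rabs rstar + delta) * A * D r) with ((r - 0) * ((Rabs rstar + delta) * (A * D r)))
    by ring.
  apply abs_RInt_le_const; [lra|apply ex_RInt_centered_dens|].
  intros t ht. unfold centered_dens, dens0. rewrite Rabs_mult.
  destruct (Rlt_dec 0 t) as [ht0 | ht0].
  - rewrite (Rabs_pos_eq (D t)) by apply Rlt_le, dens_pos.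
    apply Rmult_le_compat; [apply Rabs_pos|apply Rlt_le, dens_pos| |apply HA; lra].
    eapply Rle_trans; [apply Rabs_triang|]. rewrite Rabs_Ropp, (Rabs_pos_eq t) by lra. lra.
  - rewrite Rabs_R0, Rmult_0_r. apply Rmult_le_pos; [lra|]. apply Rmult_le_pos; lra.
Qed.

Lemma phi_vanishes_at0 eps : eps > 0 ->
  exists eta, eta > 0 /\ forall r, 0 < r < eta -> Rabs (phi r) < eps.
Proof.
  intros heps. destruct phi_le_linear0 as [c [hc Hc]].
  exists (Rmin delta (eps / (c + 1))).
  assert (0 < eps / (c + 1)) by (apply Rdiv_lt_0_compat; lra).
  pose proof (Rmin_l delta (eps / (c + 1))). pose proof (Rmin_r delta (eps / (c + 1))).
  split; [apply Rmin_glb_lt; lra|]. intros r hr.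
  apply Rle_lt_trans with (c * r); [apply Hc; lra|].
  apply Rle_lt_trans with (c * (eps / (c + 1))); [apply Rmult_le_compat_l; lra|].
  now apply Rmult_div_succ_lt.
Qed.

(* For large [s], [(s - r_* ) D s <= - eps D' s], because [v_*'(s) / s -> +oo]. *)
Lemma centered_moment_tail eps : 0 < eps -> exists R, 0 < R /\
  forall r b, R <= r -> r <= b -> Rabs (RInt (fun s => (rstar - s) * D s) r b) <= eps * D r.
Proof.
  intros heps. destruct (dvstar_superlinear (2 / eps)) as [R1 [hR1 HR1]].
  exists (Rmax R1 (Rabs rstar)).
  pose proof (Rmax_l R1 (Rabs rstar)). pose proof (Rmax_r R1 (Rabs rstar)).
  pose proof (Rle_abs rstar). pose proof (Rle_abs (- rstar)). rewrite Rabs_Ropp in *.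
  split; [lra|]. intros r b hr hb.
  set (f := fun s => (rstar - s) * D s).
  assert (hfc : forall x, 0 < x -> continuous f x).
  { intros x hx. apply (continuous_mult (fun s => rstar - s) D); [|now apply continuous_dens].
    apply (continuous_minus (fun _ => rstar) (fun s => s));
      [apply continuous_const|apply continuous_id]. }
  assert (Iup : RInt f r b <= 0 - 0).
  { apply (RInt_le_of_le_derive f hfc (fun _ => 0) (fun _ => 0)); [lra|lra| |].
    - intros; apply is_derive_Reals, derivable_pt_lim_const.
    - intros x hx. unfold f. pose proof (dens_pos d beta v x). nra. }
  assert (Ilow : eps * D b - eps * D r <= RInt f r b).
  { apply (RInt_ge_of_derive_le f hfc (fun s => eps * D s)
      (fun s => eps * (- beta * dvstar s * D s))); [lra|lra| |].
    - intros x hx. apply (is_derive_scal D), is_derive_dens. lra.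
    - intros x hx. unfold f. specialize (HR1 x ltac:(lra)).
      assert (x - rstar <= eps * (beta * dvstar x)).
      { assert (eps * (2 / eps * x) <= eps * (beta * dvstar x)) by (apply Rmult_le_compat_l; lra).
        replace (eps * (2 / eps * x)) with (2 * x) in * by (field; lra). lra. }
      replace (eps * (- beta * dvstar x * D x)) with (- (eps * (beta * dvstar x)) * D x) by ring.
      apply Rmult_le_compat_r; [apply Rlt_le, dens_pos|lra]. }
  assert (0 <= eps * D b) by (apply Rmult_le_pos; [lra|apply Rlt_le, dens_pos]).
  rewrite Rabs_left1 by lra. lra.
Qed.

Lemma centered_moment_vanishes eta : 0 < eta ->
  exists B, 0 < B /\ forall b, B <= b -> Rabs (centered_moment b) < eta.
Proof.
  intros heta.
  destruct (hrstar (eta / 2)) as [a0 [b0 [hab0 H0]]]; [lra|].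
  assert (hcont := is_derive_continuous _ _ _ (is_derive_centered_moment 0)).
  assert (heta2 : 0 < eta / 2) by lra.
  destruct (proj1 (filterlim_locally _ _) hcont (mkposreal _ heta2)) as [del Hdel].
  pose proof (cond_pos del). pose proof (Rmin_l a0 (del / 2)). pose proof (Rmin_r a0 (del / 2)).
  assert (0 < Rmin a0 (del / 2)) by (apply Rmin_glb_lt; lra).
  set (a := Rmin a0 (del / 2)) in *.
  exists b0. split; [lra|]. intros b hb.
  assert (Ha : Rabs (centered_moment a) < eta / 2).
  { assert (G0 : centered_moment 0 = 0)
      by (unfold centered_moment; rewrite RInt_point; reflexivity).
    specialize (Hdel a).
    change (Rabs (a - 0) < del -> Rabs (centered_moment a - centered_moment 0) < eta / 2) in Hdel.
    rewrite G0, Rminus_0_r, Rminus_0_r, Rabs_pos_eq in Hdel by lra. apply Hdel. lra. }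
  rewrite (centered_moment_Chasles a b) by lra.
  specialize (H0 a b ltac:(lra) hb). rewrite Rminus_0_r in H0.
  eapply Rle_lt_trans; [apply Rabs_triang|]. lra.
Qed.

Lemma phi_vanishes_at_infty eps : 0 < eps ->
  exists R, 0 < R /\ forall r, R <= r -> Rabs (phi r) <= eps.
Proof.
  intros heps.
  destruct (centered_moment_tail (eps / beta)) as [R [hR HR]]; [apply Rdiv_lt_0_compat; lra|].
  exists R. split; auto. intros r hr.
  replace eps with (beta * (eps / beta)) by (field; lra).
  apply abs_phi_le; [lra|].
  apply Rle_plus_epsilon. intros eta heta.
  destruct (centered_moment_vanishes eta heta) as [B [hB HB]].
  pose proof (Rmax_l B r). pose proof (Rmax_r B r).
  pose proof (centered_moment_Chasles r (Rmax B r) ltac:(lra) ltac:(lra)) as E.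
  specialize (HB (Rmax B r) ltac:(lra)). specialize (HR r (Rmax B r) ltac:(lra) ltac:(lra)).
  replace (centered_moment r)
    with (centered_moment (Rmax B r) - RInt (fun s => (rstar - s) * D s) r (Rmax B r)) by lra.
  eapply Rle_trans; [apply Rabs_triang|]. rewrite Rabs_Ropp. lra.
Qed.

Lemma phi_bounded : exists B, 0 <= B /\ forall r, 0 < r -> Rabs (phi r) <= B.
Proof.
  destruct phi_le_linear0 as [c [hc Hc]].
  destruct (phi_vanishes_at_infty 1) as [R [hR HR]]; [lra|].
  pose proof (Rmax_l R delta). pose proof (Rmax_r R delta).
  destruct (continuity_ab_maj (fun r => Rabs (phi r)) (delta / 2) (Rmax R delta))
    as [m [Hm hm]]; [lra| |].
  { intros r hr. apply continuity_pt_filterlim, continuous_Rabs_comp, continuous_phi. lra. }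
  pose proof (Rabs_pos (phi m)). pose proof (Rmult_le_pos c delta hc (Rlt_le _ _ hdelta)).
  exists (c * delta + 1 + Rabs (phi m)). split; [lra|].
  intros r hr.
  destruct (Rlt_or_le r delta) as [h1 | h1]; [|destruct (Rle_or_lt R r) as [h2 | h2]].
  - assert (c * r <= c * delta) by (apply Rmult_le_compat_l; lra).
    specialize (Hc r ltac:(lra)). lra.
  - specialize (HR r h2). lra.
  - specialize (Hm r ltac:(lra)). simpl in Hm. lra.
Qed.

Definition Phi r := RInt phi 1 r.

Lemma is_derive_Phi r : 0 < r -> is_derive Phi r (phi r).
Proof. intros hr. apply is_derive_RInt_Rpos; [exact continuous_phi|lra|exact hr]. Qed.

Lemma abs_Phi_le B : (forall r, 0 < r -> Rabs (phi r) <= B) ->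
  forall r, 0 < r -> Rabs (Phi r) <= B * Rabs (r - 1).
Proof.
  intros HB r hr. unfold Phi. rewrite Rmult_comm.
  apply (@norm_RInt_le_const_abs R_NormedModule phi 1 r (RInt phi 1 r) B).
  - intros x hx. apply HB. pose proof (Rmin_glb_lt 1 r 0 ltac:(lra) hr). lra.
  - apply (@RInt_correct R_CompleteNormedModule), ex_RInt_Rpos; [exact continuous_phi|lra|exact hr].
Qed.

Lemma phi_good_solution : good_solution d beta v v' rstar phi.
Proof.
  destruct phi_bounded as [B [hB HB]].
  split; [|split].
  - exists (fun r => beta * (rstar - r + dvstar r * phi r)). intros r hr. split.
    + now apply is_derive_Reals, is_derive_phi.
    + unfold dvstar. field. lra.
  - apply (L2pistar_of_sq_le phi (B ^ 2) continuous_phi).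
    intros x hx.
    assert (phi x ^ 2 <= B ^ 2)
      by (rewrite <- pow2_abs; apply pow_incr; split; [apply Rabs_pos|now apply HB]).
    pose proof (pow2_ge_0 x). pose proof (pow2_ge_0 B). nra.
  - exists Phi. split; [intros r hr; now apply is_derive_Reals, is_derive_Phi|].
    apply (L2pistar_of_sq_le Phi (2 * B ^ 2));
      [intros x hx; eapply is_derive_continuous, is_derive_Phi, hx|].
    intros x hx.
    assert (Phi x ^ 2 <= B ^ 2 * (x - 1) ^ 2).
    { rewrite <- pow2_abs, <- (pow2_abs (x - 1)), <- Rpow_mult_distr.
      apply pow_incr. split; [apply Rabs_pos|now apply abs_Phi_le]. }
    pose proof (pow2_ge_0 B). pose proof (pow2_ge_0 (x + 1)). nra.
Qed.

Lemma good_solution_is_derive psi : good_solution d beta v v' rstar psi ->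
  forall r, 0 < r -> is_derive psi r (beta * (rstar - r + dvstar r * psi r)).
Proof.
  intros [[psi' Hpsi] _] r hr. destruct (Hpsi r hr) as [h1 h2].
  replace (beta * (rstar - r + dvstar r * psi r)) with (psi' r).
  - now apply is_derive_Reals.
  - unfold dvstar. rewrite <- h2. field. lra.
Qed.

(* [(psi - phi) D] has zero derivative. *)
Lemma good_solution_sub_phi psi : good_solution d beta v v' rstar psi ->
  exists c, forall r, 0 < r -> psi r = phi r + c / D r.
Proof.
  intros hpsi.
  assert (hw : forall x, 0 < x -> is_derive (fun r => (psi r - phi r) * D r) x 0).
  { intros x hx.
    replace 0 with (plus (mult (minus (beta * (rstar - x + dvstar x * psi x))
                                      (beta * (rstar - x + dvstar x * phi x))) (D x))
                         (mult (psi x - phi x) (- beta * dvstar x * D x)))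
      by (unfold minus, plus, opp, mult; simpl; ring).
    apply (is_derive_mult (fun r => psi r - phi r) D); [|now apply is_derive_dens|apply Rmult_comm].
    apply (is_derive_minus psi phi); [now apply good_solution_is_derive|now apply is_derive_phi]. }
  exists ((psi 1 - phi 1) * D 1). intros r hr.
  pose proof (eq_of_is_derive_0 _ hw r 1 hr ltac:(lra)) as E. simpl in E.
  pose proof (dens_pos d beta v r).
  rewrite <- E. field. lra.
Qed.

Lemma good_solution_unique psi : good_solution d beta v v' rstar psi ->
  forall r, 0 < r -> psi r = phi r.
Proof.
  intros hpsi. destruct (good_solution_sub_phi psi hpsi) as [c Hc].
  destruct (Req_dec c 0) as [-> | hc].
  { intros r hr. rewrite Hc by exact hr. unfold Rdiv. ring. }
  exfalso.
  destruct phi_bounded as [B [hB HB]].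
  assert (hc' : 0 < Rabs c) by now apply Rabs_pos_lt.
  assert (hcB : 0 < Rabs c / (2 * (B + 1))) by (apply Rdiv_lt_0_compat; lra).
  destruct (dens_vanishes_at_infty (Rmin 1 (Rabs c / (2 * (B + 1)))))
    as [S [hS HS]]; [apply Rmin_glb_lt; lra|].
  assert (hcont : forall x, 0 < x -> continuous (fun r => psi r ^ 2 * D r) x).
  { intros x hx. apply continuous_sq_mul_dens; [exact hx|].
    eapply is_derive_continuous, good_solution_is_derive; eauto. }
  assert (hnonneg : forall x, 0 < x -> 0 <= psi x ^ 2 * D x).
  { intros x hx. pose proof (dens_pos d beta v x). pose proof (pow2_ge_0 (psi x)). nra. }
  destruct hpsi as [_ [[l hl] _]].
  apply (not_is_RInt_0inf_of_ge _ hcont hnonneg (c ^ 2 / 4) S l).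
  - pose proof (pow2_gt_0 c hc). lra.
  - lra.
  - intros s hs. specialize (HS s hs). pose proof (dens_pos d beta v s).
    pose proof (Rmin_l 1 (Rabs c / (2 * (B + 1)))). pose proof (Rmin_r 1 (Rabs c / (2 * (B + 1)))).
    rewrite Hc by lra. apply sq_add_div_ge with B; [lra|apply HB; lra|].
    assert (B * D s <= (B + 1) * (Rabs c / (2 * (B + 1)))) by (apply Rmult_le_compat; lra).
    replace ((B + 1) * (Rabs c / (2 * (B + 1)))) with (Rabs c / 2) in * by (field; lra).
    lra.
  - now apply is_RInt_0inf_improper_int0inf.
Qed.

End Solution.
End Density.

Theorem propositionC1 (d : nat) (beta : R) (v v' : R -> R)
  (hd : (2 <= d)%nat) (hbeta : 0 < beta)
  (hv : forall r, 0 < r -> derivable_pt_lim v r (v' r))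
  (hv'c : forall r, 0 < r -> continuity_pt v' r)
  (hlim0 : exists C delta, 0 < delta /\ forall r, 0 < r < delta -> v' r <= C)
  (hlimoo : forall M, exists R0, forall r, R0 < r -> v' r / r > M) :
  exists Zstar m1,
    0 < Zstar /\
    improper_int0inf (dens d beta v) Zstar /\
    improper_int0inf (fun r => r * dens d beta v r) m1 /\
    let rstar := m1 / Zstar in
    exists phi : R -> R,
      good_solution d beta v v' rstar phi /\
      (forall psi : R -> R, good_solution d beta v v' rstar psi ->
         forall r, 0 < r -> psi r = phi r) /\
      (forall eps, eps > 0 -> exists delta, delta > 0 /\
         forall r, 0 < r < delta -> Rabs (phi r) < eps) /\
      (forall eps, eps > 0 -> exists R0,
         forall r, R0 < r -> Rabs (phi r) < eps).
Proof.
  destruct hlim0 as [C [delta [hdelta hC]]].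
  destruct (dens_moments d beta v v' hd hbeta hv C delta hdelta hC hlimoo)
    as [Z [m1 [hZ [hZint hm1int]]]].
  assert (hDc := continuous_dens d beta v v' hbeta hv).
  assert (hrDc := continuous_id_mul_dens d beta v v' hbeta hv).
  exists Z, m1. split; [exact hZ|]. split; [|split].
  - now apply improper_int0inf_is_RInt_0inf.
  - now apply improper_int0inf_is_RInt_0inf.
  - (* [r_*] is the mean of [pi_*]: [(r_* - s) D s] has integral 0. *)
    set (rstar := m1 / Z).
    assert (hrstar : is_RInt_0inf (fun s => (rstar - s) * dens d beta v s) 0).
    { apply (is_RInt_0inf_ext (fun s => rstar * dens d beta v s - s * dens d beta v s));
        [intros; ring|].
      replace 0 with (rstar * Z - m1) by (unfold rstar; field; lra).
      now apply is_RInt_0inf_lincomb. }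
    exists (phi d beta v rstar). split; [|split; [|split]].
    + eapply phi_good_solution with (C := C) (delta := delta); eauto.
    + eapply good_solution_unique with (C := C) (delta := delta); eauto.
    + eapply phi_vanishes_at0 with (C := C) (delta := delta); eauto.
    + intros eps heps.
      destruct (phi_vanishes_at_infty d beta v v' hd hbeta hv C delta hdelta hC hlimoo
                  rstar hrstar (eps / 2)) as [R [hR HR]]; [lra|].
      exists R. intros r hr. specialize (HR r ltac:(lra)). lra.
Qed.
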